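(* Let $V$ be a Whittaker module of type $\eta$ over $R$. Then $\mathrm{End}_R(V)\cong Z(R)/Z_V$ (via the action of the center on $V$). In particular $\mathrm{End}_R(V)$ is commutative.
   Context: Let $f\in\mathbb{C}[H]$ be a polynomial. $R=R(f)$ is the associative $\mathbb{C}$-algebra generated by $E,F,H$ with relations $EF-FE=f(H)$, $HE-EH=E$, $HF-FH=-F$. Let $R(E)=\mathbb{C}[E]$; $Z(R)$ is the center of $R$. Fix an algebra homomorphism $\eta:R(E)\to\mathbb{C}$ with $\eta(E)\neq0$. A vector $v$ of an $R$-module $V$ is a Whittaker vector (of type $\eta$) if $Ev=\eta(E)v$; $V$ is a Whittaker module of type $\eta$ if $V=Rv$ for some Whittaker vector $v$. $Z_V=\mathrm{Ann}_R(V)\cap Z(R)$. *)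

(* C is modelled as  Rr[i]  (complex numbers over a realType Rr;
   every realType is a complete archimedean ordered field, i.e. the reals). *)
From HB Require Import structures.
From mathcomp Require Import all_boot all_order all_algebra.
From mathcomp Require Import reals.
From mathcomp Require Import complex.
Set Implicit Arguments. Unset Strict Implicit. Unset Printing Implicit Defensive.
Import Order.TTheory GRing.Theory Num.Theory.
Local Open Scope ring_scope.

Section Defs.
Variable K : fieldType.

Definition smith_rel (p : {poly K}) (B : algType K) (e f h : B) : Prop :=
  [/\ e * f - f * e = horner_alg h p, h * e - e * h = e & h * f - f * h = - f].

Definition is_alg_hom (A B : algType K) (phi : A -> B) : Prop :=
  [/\ forall a b, phi (a + b) = phi a + phi b,
      forall (c : K) a, phi (c *: a) = c *: phi a,
      forall a b, phi (a * b) = phi a * phi b & phi 1 = 1].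

(* (A, E, F, H) is the algebra R(p) generated by E,F,H subject only to the
   relations of smith_rel: it satisfies them and is initial among K-algebras
   equipped with three elements satisfying them. *)
Definition is_R_of (p : {poly K}) (A : algType K) (E F H : A) : Prop :=
  smith_rel p E F H /\
  forall (B : algType K) (e f h : B), smith_rel p e f h ->
    (exists phi : A -> B, is_alg_hom phi /\ phi E = e /\ phi F = f /\ phi H = h) /\
    (forall phi psi : A -> B, is_alg_hom phi -> is_alg_hom psi ->
       phi E = psi E -> phi F = psi F -> phi H = psi H -> forall a, phi a = psi a).

Definition is_module (A : algType K) (V : lmodType K) (act : A -> V -> V) : Prop :=
  [/\ forall a v w, act a (v + w) = act a v + act a w,
      forall a b v, act (a + b) v = act a v + act b v,
      forall (c : K) a v, act (c *: a) v = c *: act a v,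
      forall a b v, act (a * b) v = act a (act b v) & forall v, act 1 v = v].

Definition central (A : algType K) (z : A) : Prop := forall a, z * a = a * z.

Definition in_Z_V (A : algType K) (V : lmodType K) (act : A -> V -> V) (z : A) : Prop :=
  central z /\ forall v, act z v = 0.

Definition is_endo (A : algType K) (V : lmodType K) (act : A -> V -> V) (g : V -> V) : Prop :=
  (forall v w, g (v + w) = g v + g w) /\ (forall a v, g (act a v) = act a (g v)).

(* v is a Whittaker vector of type eta, where eta(E) = c *)
Definition whittaker_vector (A : algType K) (V : lmodType K) (act : A -> V -> V)
  (E : A) (c : K) (v : V) : Prop := act E v = c *: v.

Definition whittaker_module (A : algType K) (V : lmodType K) (act : A -> V -> V)
  (E : A) (c : K) : Prop :=
  exists v, whittaker_vector act E c v /\ forall w, exists a, w = act a v.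

End Defs.

From HB Require Import structures.
From mathcomp Require Import all_boot all_order all_algebra.
From mathcomp Require Import reals complex.
From mathcomp Require Import boolp ring.
Set Implicit Arguments. Unset Strict Implicit. Unset Printing Implicit Defensive.
Import Order.TTheory GRing.Theory Num.Theory.
Local Open Scope ring_scope.

(* Let v be a Whittaker vector generating V.  Choosing u with u(X) - u(X-1) = f,
   the Casimir element FE + u(H) is central, and F v = eta^-1 ((FE + u(H)) v - u(H) v).
   Hence V is spanned by the vectors z b_j(H) v with z central, where
   b_j = binom(-X, j) satisfies Pascal's rule b_{j+1}(X-1) = b_{j+1} + b_j.
   In this basis E - eta acts as eta times the shift b_{j+1} |-> b_j, so a
   vanishing sum sum_j z_j b_j(H) v forces every z_j v = 0, and the Whittaker
   vectors of V are exactly the z v with z central.  An endomorphism sends v to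
   such a vector z v, hence coincides with the action of z. *)

Section AlgHom.
Variable K : fieldType.

Lemma id_alg_hom (A : algType K) : is_alg_hom (fun a : A => a).
Proof. by []. Qed.

Lemma comp_alg_hom (A B C : algType K) (phi : A -> B) (psi : B -> C) :
  is_alg_hom phi -> is_alg_hom psi -> is_alg_hom (psi \o phi).
Proof.
case=> phiD phiZ phiM phi1 [psiD psiZ psiM psi1].
by split=> [a b|c a|a b|] /=; rewrite ?phiD ?phiZ ?phiM ?phi1.
Qed.

Lemma alg_hom_horner (A B : algType K) (phi : A -> B) (a : A) (q : {poly K}) :
  is_alg_hom phi -> phi (horner_alg a q) = horner_alg (phi a) q.
Proof.
case=> phiD phiZ phiM phi1; elim/poly_ind: q => [|q c IH].
  by rewrite !rmorph0 -(scale0r (0 : A)) phiZ scale0r.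
by rewrite !rmorphD !rmorphM /= !horner_algX !horner_algC phiD phiM IH phiZ phi1.
Qed.

End AlgHom.

Section Center.
Variables (K : fieldType) (A : algType K).

Lemma central0 : central (0 : A).
Proof. by move=> a; rewrite mul0r mulr0. Qed.

Lemma centralD (z1 z2 : A) : central z1 -> central z2 -> central (z1 + z2).
Proof. by move=> c1 c2 a; rewrite mulrDl mulrDr c1 c2. Qed.

Lemma centralZ (c : K) (z : A) : central z -> central (c *: z).
Proof. by move=> cz a; rewrite -scalerAl cz scalerAr. Qed.

Lemma centralM (z1 z2 : A) : central z1 -> central z2 -> central (z1 * z2).
Proof. by move=> c1 c2 a; rewrite -mulrA c2 mulrA c1 mulrA. Qed.

Lemma central_scalar (c : K) : central (c%:A : A).
Proof. by move=> a; rewrite mulr_algl mulr_algr. Qed.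

Lemma mul_horner_shift (x h : A) (c : K) (q : {poly K}) :
  x * h = (h + c%:A) * x -> x * horner_alg h q = horner_alg h (q \Po ('X + c%:P)) * x.
Proof.
move=> xh; elim/poly_ind: q => [|q d IH]; first by rewrite comp_poly0 !rmorph0 mulr0 mul0r.
rewrite comp_polyD comp_polyM comp_polyX comp_polyC !(rmorphD, rmorphM) /=.
rewrite !horner_algC !horner_algX mulrDr mulrA IH -mulrA xh !mulrA.
by rewrite mulrDl central_scalar.
Qed.

End Center.

Section NegativeBinomial.
Variable K : fieldType.
Hypothesis K_char0 : [pchar K] =i pred0.

Fact negbinom_key : unit. Proof. by []. Qed.
Definition negbinom (j : nat) : {poly K} := locked_with negbinom_key
  (((-1) ^+ j / j`!%:R) *: \prod_(i < j) ('X + i%:R%:P)).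
Canonical negbinom_unlockable j := [unlockable of negbinom j].

Lemma natrS_neq0 n : n.+1%:R != 0 :> K.
Proof. by rewrite (pcharf0P K).1. Qed.

Lemma negbinom0 : negbinom 0 = 1.
Proof. by rewrite [negbinom _]unlock big_ord0 expr0 divr1 scale1r. Qed.

Lemma negbinomS j : negbinom j.+1 = - j.+1%:R^-1 *: (('X + j%:R%:P) * negbinom j).
Proof.
rewrite [negbinom _.+1]unlock [negbinom _]unlock big_ord_recr /=.
rewrite [_ * ('X + _)]mulrC -scalerAr scalerA factS natrM invfM exprS; congr (_ *: _); ring.
Qed.

Lemma scale_negbinomS j : j.+1%:R *: negbinom j.+1 = - (('X + j%:R%:P) * negbinom j).
Proof. by rewrite negbinomS scalerA mulrN mulfV ?natrS_neq0 // scaleN1r. Qed.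

Lemma mulX_negbinom j :
  'X * negbinom j = (- j.+1%:R) *: negbinom j.+1 + (- j%:R) *: negbinom j.
Proof. by rewrite !scaleNr scale_negbinomS opprK -mul_polyC; ring. Qed.

Lemma negbinom_shift j : negbinom j.+1 \Po ('X - 1) = negbinom j.+1 + negbinom j.
Proof.
elim: j => [|j IH].
  rewrite negbinomS negbinom0 invr1 comp_polyZ comp_polyM comp_polyD comp_polyX.
  by rewrite !comp_polyC -!mul_polyC; ring.
apply: (scalerI (natrS_neq0 j.+1)).
rewrite -linearZ /= scalerDr (scale_negbinomS j.+1) raddfN /= comp_polyM IH.
have -> : ('X + j.+1%:R%:P) \Po ('X - 1) = 'X + j%:R%:P :> {poly K}.
  by rewrite comp_polyD comp_polyX comp_polyC -natr1 polyCD polyC1; ring.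
by rewrite mulrDr opprD -(scale_negbinomS j) -!mul_polyC; ring.
Qed.

Lemma difference_surjective (q : {poly K}) : exists u, u - (u \Po ('X - 1)) = q.
Proof.
pose im (r : {poly K}) := exists u, u - (u \Po ('X - 1)) = r.
have imD a b : im a -> im b -> im (a + b).
  by move=> [u <-] [w <-]; exists (u + w); rewrite comp_polyD; ring.
have imZ c a : im a -> im (c *: a).
  by move=> [u <-]; exists (c *: u); rewrite comp_polyZ scalerBr.
have im_negbinom j : im (negbinom j).
  by exists (- negbinom j.+1); rewrite raddfN /= negbinom_shift; ring.
suff im_mul j : im (q * negbinom j) by move: (im_mul 0%N); rewrite negbinom0 mulr1.
elim/poly_ind: q j => [|q c IH] j; first by exists 0; rewrite mul0r comp_poly0 subr0.
rewrite mulrDl -mulrA mulX_negbinom mulrDr -!scalerAr mul_polyC.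
apply: (imD); first apply: (imD).
- exact: imZ _ _ (IH j.+1).
- exact: imZ _ _ (IH j).
- exact: imZ _ _ (im_negbinom j).
Qed.

End NegativeBinomial.

Section SmithAlgebra.
Variables (K : fieldType) (p : {poly K}) (A : algType K) (E F H : A).
Hypothesis HR : is_R_of p E F H.

Section Subalgebra.
Variable S : {pred A}.
Hypothesis S_closed : subalg_closed S.

HB.instance Definition _ := GRing.isSubalgClosed.Build K A S S_closed.
Record subalg := Subalg { subalg_val : A; _ : subalg_val \in S }.
HB.instance Definition _ := [isSub for subalg_val].
HB.instance Definition _ := [Choice of subalg by <:].
HB.instance Definition _ := [SubChoice_isSubAlgebra of subalg by <:].

Lemma val_alg_hom : is_alg_hom (val : subalg -> A).
Proof. by split=> [a b|c a|a b|]; rewrite ?rmorphD ?linearZ ?rmorphM ?rmorph1. Qed.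

Lemma R_generated : E \in S -> F \in S -> H \in S -> forall a, a \in S.
Proof.
move=> SE SF SH a; have [[rEF rHE rHF] initial] := HR.
pose e : subalg := Subalg SE; pose f : subalg := Subalg SF; pose h : subalg := Subalg SH.
have rel : smith_rel p e f h.
  split; apply: val_inj; rewrite /= ?rmorphB ?rmorphM ?rmorphN //=.
  by rewrite (alg_hom_horner _ _ val_alg_hom).
have [[phi [phi_hom [phiE [phiF phiH]]]] _] := initial _ _ _ _ rel.
have [_ unique] := initial _ _ _ _ (And3 rEF rHE rHF).
have -> : a = val (phi a).
  by apply: (unique _ _ (id_alg_hom A) (comp_alg_hom phi_hom val_alg_hom));
    rewrite /= ?phiE ?phiF ?phiH.
exact: valP.
Qed.

End Subalgebra.

Lemma R_ind (P : A -> Prop) : P 1 -> (forall a b, P a -> P b -> P (a + b)) ->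
  (forall c a, P a -> P (c *: a)) -> (forall a b, P a -> P b -> P (a * b)) ->
  P E -> P F -> P H -> forall a, P a.
Proof.
move=> P1 PD PZ PM PE PF PH a.
pose S : {pred A} := fun a => `[< P a >].
have S_closed : subalg_closed S.
  split; first exact/asboolP.
    by move=> c u w /asboolP Pu /asboolP Pw; apply/asboolP/PD => //; apply: PZ.
  by move=> u w /asboolP Pu /asboolP Pw; apply/asboolP/PM.
by apply/asboolP; apply: (R_generated S_closed); apply/asboolP.
Qed.

Local Notation ev := (horner_alg H).

Lemma mulEF : E * F = F * E + ev p.
Proof. by case: HR => [[<- _ _] _]; rewrite addrC subrK. Qed.

Lemma mulEH : E * H = (H + (-1)%:A) * E.
Proof.
case: HR => [[_ /eqP + _] _]; rewrite subr_eq => /eqP rHE.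
by rewrite scaleN1r mulrDl mulN1r rHE addrAC subrr add0r.
Qed.

Lemma mulFH : F * H = (H + 1%:A) * F.
Proof.
case: HR => [[_ _ /eqP +] _]; rewrite subr_eq => /eqP rHF.
by rewrite scale1r mulrDl mul1r rHF addrAC addNr add0r.
Qed.

Lemma mulE_horner q : E * ev q = ev (q \Po ('X - 1)) * E.
Proof. by rewrite (mul_horner_shift _ mulEH) polyCN. Qed.

Lemma mulF_horner q : F * ev q = ev (q \Po ('X + 1)) * F.
Proof. exact: mul_horner_shift mulFH. Qed.

Lemma mulH_horner q : H * ev q = ev q * H.
Proof. by have := congr1 ev (mulrC 'X q); rewrite !rmorphM /= horner_algX. Qed.

Lemma central_generators w :
  w * E = E * w -> w * F = F * w -> w * H = H * w -> central w.
Proof.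
move=> wE wF wH; apply: (@R_ind (fun a => w * a = a * w)) => //.
- by rewrite mulr1 mul1r.
- by move=> a b wa wb; rewrite mulrDr mulrDl wa wb.
- by move=> c a wa; rewrite -scalerAr -scalerAl wa.
- by move=> a b wa wb; rewrite mulrA wa -!mulrA wb.
Qed.

Lemma casimir_central u : u - (u \Po ('X - 1)) = p -> central (F * E + ev u).
Proof.
move=> hu.
have shiftE_u : u \Po ('X - 1) = u - p by rewrite -hu subKr.
have shiftF_u : u \Po ('X + 1) = p \Po ('X + 1) + u.
  rewrite -hu comp_polyB -comp_polyA comp_polyB comp_polyX comp_polyC addrK.
  by rewrite comp_polyXr addrC subrK.
apply: central_generators.
- rewrite mulrDl mulrDr mulrA mulEF mulE_horner shiftE_u rmorphB /= !mulrDl.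
  by rewrite mulNr addrACA subrr addr0.
- rewrite mulrDl mulrDr mulF_horner shiftF_u rmorphD /= mulrDl -mulrA mulEF mulrDr.
  by rewrite mulF_horner addrA.
- rewrite mulrDl mulrDr mulH_horner -mulrA mulEH !mulrA.
  rewrite mulrDr mulFH scaleN1r mulrN1 [(H + _) * F]mulrDl scale1r mul1r.
  by rewrite addrK.
Qed.

End SmithAlgebra.

Section WhittakerModule.
Variables (K : fieldType) (A : algType K) (V : lmodType K) (act : A -> V -> V).
Hypothesis Hmod : is_module act.

Lemma actDr a x y : act a (x + y) = act a x + act a y. Proof. by case: Hmod. Qed.
Lemma actDl a b x : act (a + b) x = act a x + act b x. Proof. by case: Hmod. Qed.
Lemma actZl c a x : act (c *: a) x = c *: act a x. Proof. by case: Hmod. Qed.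
Lemma actM a b x : act (a * b) x = act a (act b x). Proof. by case: Hmod. Qed.
Lemma act1 x : act 1 x = x. Proof. by case: Hmod. Qed.

Lemma act0r a : act a 0 = 0.
Proof. by apply: (addrI (act a 0)); rewrite -actDr !addr0. Qed.

Lemma act0l x : act 0 x = 0.
Proof. by apply: (addrI (act 0 x)); rewrite -actDl !addr0. Qed.

Lemma act_scalar c x : act c%:A x = c *: x.
Proof. by rewrite actZl act1. Qed.

Lemma actZr c a x : act a (c *: x) = c *: act a x.
Proof. by rewrite -act_scalar -actM -central_scalar actM act_scalar. Qed.

Lemma act_sum (I : Type) (r : seq I) (P : pred I) a (f : I -> V) :
  act a (\sum_(i <- r | P i) f i) = \sum_(i <- r | P i) act a (f i).
Proof. exact: (big_morph _ (actDr a) (act0r a)). Qed.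

Lemma act_centralC z a x : central z -> act z (act a x) = act a (act z x).
Proof. by move=> cz; rewrite -!actM cz. Qed.

Lemma endoZ g c x : is_endo act g -> g (c *: x) = c *: g x.
Proof. by case=> _ gA; rewrite -act_scalar gA act_scalar. Qed.

Variables (p : {poly K}) (E F H : A) (eta : K) (v : V).
Hypothesis K_char0 : [pchar K] =i pred0.
Hypothesis HR : is_R_of p E F H.
Hypothesis eta_neq0 : eta != 0.
Hypothesis whittaker_v : act E v = eta *: v.
Hypothesis generated_v : forall w, exists a, w = act a v.

Local Notation ev := (horner_alg H).
Local Notation b j := (ev (negbinom K j)).

Definition binom_sum (y : nat -> A) n : V := \sum_(j < n) act (y j * b j) v.

Definition zspan (x : V) : Prop :=
  exists n y, (forall j, central (y j)) /\ x = binom_sum y n.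

Lemma binom_sum_pad n m (y : nat -> A) : (n <= m)%N ->
  binom_sum (fun j => if (j < n)%N then y j else 0) m = binom_sum y n.
Proof.
move=> le_nm; rewrite /binom_sum -(subnKC le_nm) big_split_ord /= [X in _ + X]big1.
  by rewrite addr0; apply: eq_bigr => i _; rewrite ltn_ord.
by move=> i _; rewrite ltnNge leq_addr /= mul0r act0l.
Qed.

Lemma zspan0 : zspan 0.
Proof.
by exists 0%N, (fun=> 0); split=> [_|]; [exact: central0 | rewrite /binom_sum big_ord0].
Qed.

Lemma zspanD x1 x2 : zspan x1 -> zspan x2 -> zspan (x1 + x2).
Proof.
move=> [n1 [y1 [c1 ->]]] [n2 [y2 [c2 ->]]].
pose cut n y j := if (j < n)%N then y j else 0 : A.
exists (maxn n1 n2), (fun j => cut n1 y1 j + cut n2 y2 j); split.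
  by move=> j; apply: centralD; rewrite /cut; case: ifP => _ //; exact: central0.
rewrite -(binom_sum_pad y1 (leq_maxl n1 n2)) -(binom_sum_pad y2 (leq_maxr n1 n2)).
by rewrite /binom_sum -big_split /=; apply: eq_bigr => i _; rewrite mulrDl actDl.
Qed.

Lemma zspanZ c x : zspan x -> zspan (c *: x).
Proof.
move=> [n [y [cy ->]]]; exists n, (fun j => c *: y j); split=> [j|]; first exact: centralZ.
by rewrite /binom_sum scaler_sumr; apply: eq_bigr => i _; rewrite -scalerAl actZl.
Qed.

Lemma zspan_sum n (f : 'I_n -> V) : (forall i, zspan (f i)) -> zspan (\sum_(i < n) f i).
Proof.
elim: n f => [|n IH] f zf; first by rewrite big_ord0; exact: zspan0.
by rewrite big_ord_recr; apply: zspanD; [apply: IH|].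
Qed.

Lemma zspan_term y j : central y -> zspan (act (y * b j) v).
Proof.
move=> cy; exists j.+1, (fun k => if k == j then y else 0); split.
  by move=> k; case: eqP => _ //; exact: central0.
rewrite /binom_sum big_ord_recr /= eqxx big1 ?add0r // => i _.
by rewrite (ltn_eqF (ltn_ord i)) mul0r act0l.
Qed.

Lemma zspan_v : zspan v.
Proof.
have -> : v = act (1 * b 0) v by rewrite negbinom0 rmorph1 mulr1 act1.
by apply: zspan_term => a; rewrite mul1r mulr1.
Qed.

Lemma zspan_central z x : central z -> zspan x -> zspan (act z x).
Proof.
move=> cz [n [y [cy ->]]]; exists n, (fun j => z * y j); split=> [j|].
  exact: centralM.
by rewrite /binom_sum act_sum; apply: eq_bigr => i _; rewrite -actM mulrA.
Qed.

Lemma zspan_act_terms a : (forall y j, central y -> zspan (act a (act (y * b j) v))) ->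
  forall x, zspan x -> zspan (act a x).
Proof.
move=> za x [n [y [cy ->]]]; rewrite /binom_sum act_sum.
by apply: zspan_sum => i; apply: za.
Qed.

Lemma zspan_actH x : zspan x -> zspan (act H x).
Proof.
apply: zspan_act_terms => y j cy.
rewrite -actM mulrA -(cy H) -mulrA -{1}(horner_algX H) -rmorphM /= (mulX_negbinom K_char0).
rewrite rmorphD /= !linearZ /= mulrDr !mulr_algl -!scalerAr actDl !actZl.
by apply: zspanD; apply: zspanZ; apply: zspan_term.
Qed.

Lemma zspan_act_horner q x : zspan x -> zspan (act (ev q) x).
Proof.
elim/poly_ind: q x => [|q c IH] x zx; first by rewrite rmorph0 act0l; exact: zspan0.
rewrite rmorphD rmorphM /= horner_algX horner_algC actDl actM act_scalar.
by apply: zspanD; [apply: IH; apply: zspan_actH | apply: zspanZ].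
Qed.

Lemma zspan_actE x : zspan x -> zspan (act E x).
Proof.
apply: zspan_act_terms => y j cy.
rewrite -actM mulrA -(cy E) -mulrA (mulE_horner HR) mulrA !actM whittaker_v !actZr.
by apply: zspanZ; apply: zspan_central => //; apply: zspan_act_horner; exact: zspan_v.
Qed.

Lemma zspan_Fv : zspan (act F v).
Proof.
have [u hu] := difference_surjective K_char0 p.
have -> : act F v = eta^-1 *: act (F * E + ev u) v + (- eta^-1) *: act (ev u) v.
  rewrite scaleNr -scalerBr actDl actM whittaker_v actZr addrK.
  by rewrite scalerA mulVf // scale1r.
apply: zspanD; apply: zspanZ; last by apply: zspan_act_horner; exact: zspan_v.
by apply: zspan_central; [exact: casimir_central HR _ hu | exact: zspan_v].
Qed.

Lemma zspan_actF x : zspan x -> zspan (act F x).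
Proof.
apply: zspan_act_terms => y j cy.
rewrite -actM mulrA -(cy F) -mulrA (mulF_horner HR) mulrA !actM.
by apply: zspan_central => //; apply: zspan_act_horner; exact: zspan_Fv.
Qed.

Lemma zspan_all x : zspan x.
Proof.
have [a ->] := generated_v x.
suff zspan_a : forall w, zspan w -> zspan (act a w) by apply/zspan_a/zspan_v.
elim/(R_ind HR): a.
- by move=> w zw; rewrite act1.
- by move=> a b za zb w zw; rewrite actDl; apply: zspanD; [apply: za | apply: zb].
- by move=> c a za w zw; rewrite actZl; apply/zspanZ/za.
- by move=> a b za zb w zw; rewrite actM; apply/za/zb.
- exact: zspan_actE.
- exact: zspan_actF.
- exact: zspan_actH.
Qed.

Lemma act_E_term0 y : central y -> act E (act (y * b 0) v) = eta *: act (y * b 0) v.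
Proof. by move=> cy; rewrite negbinom0 rmorph1 mulr1 -act_centralC // whittaker_v actZr. Qed.

Lemma act_E_termS y j : central y ->
  act E (act (y * b j.+1) v) = eta *: act (y * b j.+1) v + eta *: act (y * b j) v.
Proof.
move=> cy; rewrite -actM mulrA -(cy E) -mulrA (mulE_horner HR) (negbinom_shift K_char0).
by rewrite rmorphD /= mulrA actM whittaker_v actZr mulrDr actDl scalerDr.
Qed.

Lemma act_E_binom_sum n y : (forall j, central (y j)) ->
  act E (binom_sum y n.+1) = eta *: binom_sum y n.+1 + eta *: binom_sum (fun j => y j.+1) n.
Proof.
move=> cy; rewrite /binom_sum act_sum !big_ord_recl act_E_term0 //.
under eq_bigr => i _ do rewrite lift0 act_E_termS //.
by rewrite big_split /= scalerDr !scaler_sumr addrA.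
Qed.

Lemma whittaker_binom_sum n y : (forall j, central (y j)) ->
  act E (binom_sum y n.+1) = eta *: binom_sum y n.+1 -> binom_sum (fun j => y j.+1) n = 0.
Proof.
move=> cy Ew; apply: (scalerI eta_neq0); rewrite scaler0.
by apply: (addrI (eta *: binom_sum y n.+1)); rewrite -act_E_binom_sum // Ew addr0.
Qed.

Lemma binom_sum_tail0 n y : (forall j, central (y j)) ->
  (forall j, (j < n)%N -> act (y j.+1) v = 0) -> binom_sum y n.+1 = act (y 0%N) v.
Proof.
move=> cy tail0; rewrite /binom_sum big_ord_recl big1 ?addr0 => [|i _].
  by rewrite negbinom0 rmorph1 mulr1.
by rewrite lift0 cy actM tail0 // act0r.
Qed.

Lemma binom_sum_eq0 n y : (forall j, central (y j)) -> binom_sum y n = 0 ->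
  forall j, (j < n)%N -> act (y j) v = 0.
Proof.
elim: n y => [//|n IH] y cy Sy0.
have tail0 : forall j, (j < n)%N -> act (y j.+1) v = 0.
  apply: IH => [j|]; first exact: cy.
  by apply: whittaker_binom_sum => //; rewrite Sy0 act0r scaler0.
by case=> [_|j]; [rewrite -(binom_sum_tail0 cy tail0) | exact: tail0].
Qed.

Lemma whittaker_vector_central w :
  act E w = eta *: w -> exists z, central z /\ w = act z v.
Proof.
move=> Ew; have [[|n] [y [cy def_w]]] := zspan_all w.
  by exists 0; split; [exact: central0 | rewrite def_w /binom_sum big_ord0 act0l].
exists (y 0%N); split=> //; rewrite def_w; apply: binom_sum_tail0 => //.
by apply: binom_sum_eq0 (fun j => cy j.+1) _; apply: whittaker_binom_sum cy _; rewrite -def_w.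
Qed.

Lemma endo_central g : is_endo act g -> exists z, central z /\ forall x, g x = act z x.
Proof.
move=> g_endo; have [_ gA] := g_endo.
have [z [cz gv]] : exists z, central z /\ g v = act z v.
  by apply: whittaker_vector_central; rewrite -gA whittaker_v (endoZ _ _ g_endo).
exists z; split=> // x; have [a ->] := generated_v x.
by rewrite gA gv (act_centralC _ _ cz).
Qed.

End WhittakerModule.

Theorem mainTheorem5 (Rr : realType) (p : {poly Rr[i]})
  (A : algType Rr[i]) (E F H : A) (HR : is_R_of p E F H)
  (V : lmodType Rr[i]) (act : A -> V -> V) (Hmod : is_module act)
  (etaE : Rr[i]) (HetaE : etaE != 0) (HW : whittaker_module act E etaE) :
  [/\ (forall z : A, central z -> is_endo act (act z)),
      (forall g : V -> V, is_endo act g -> exists z : A, central z /\ forall v, g v = act z v),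
      (forall z : A, central z -> ((forall v, act z v = 0) <-> in_Z_V act z))
    & (forall g1 g2 : V -> V, is_endo act g1 -> is_endo act g2 ->
         forall v, g1 (g2 v) = g2 (g1 v))].
Proof.
have [v [whittaker_v generated_v]] := HW.
have endo_central := endo_central Hmod (pchar_num _) HR HetaE whittaker_v generated_v.
split.
- by move=> z cz; split=> [x y|a x]; [exact: actDr | exact: act_centralC].
- exact: endo_central.
- by move=> z cz; split=> [z_ann | []].
- move=> g1 g2 /endo_central[z1 [c1 e1]] /endo_central[z2 [c2 e2]] x.
  by rewrite !e1 !e2 (act_centralC _ _ _ c1).
Qed.
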